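(* Let $W\in[0,1]^{k\times k}$ be a symmetric positive semidefinite matrix with unit diagonal, let $\mu>0$, and consider the collaborative learning problem with strategy space $\mathbb{R}_+^k$, utilities $u_i({\boldsymbol\theta})=W_i^\top{\boldsymbol\theta}$ ($W_i$ the $i$-th column of $W$) and thresholds $\mu_i=\mu$. If ${\boldsymbol\theta}^{\mathrm{eq}}$ is an optimal stable equilibrium with ${\boldsymbol\theta}^{\mathrm{eq}}>\mathbf{0}$ (all entries positive), then ${\boldsymbol\theta}^{\mathrm{eq}}$ is socially optimal.
   Context: ${\boldsymbol\theta}$ is feasible if $u_i({\boldsymbol\theta})\ge\mu$ for all $i$. A feasible ${\boldsymbol\theta}\in\mathbb{R}_+^k$ is a stable equilibrium if for no $i$ is there $0\le\theta_i'<\theta_i$ with $u_i(\theta_i',{\boldsymbol\theta}_{-i})\ge\mu$. An optimal stable equilibrium minimizes $\mathbf{1}^\top{\boldsymbol\theta}$ among stable equilibria. A socially optimal solution minimizes $\mathbf{1}^\top{\boldsymbol\theta}$ over all feasible ${\boldsymbol\theta}\ge\mathbf{0}$. *)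

From mathcomp Require Import all_boot all_order all_algebra.
Set Implicit Arguments. Unset Strict Implicit. Unset Printing Implicit Defensive.
Import Order.TTheory GRing.Theory Num.Theory.
Local Open Scope ring_scope.

Section Collab.
Variables (R : realFieldType) (k : nat).

Definition symmetric_mx (W : 'M[R]_k) : Prop := W^T = W.
Definition psd_mx (W : 'M[R]_k) : Prop :=
  forall x : 'cV[R]_k, 0 <= (x^T *m W *m x) ord0 ord0.
Definition entries01 (W : 'M[R]_k) : Prop :=
  forall i j, 0 <= W i j <= 1.
Definition unit_diag (W : 'M[R]_k) : Prop := forall i, W i i = 1.

Definition util (W : 'M[R]_k) (i : 'I_k) (theta : 'cV[R]_k) : R :=
  ((col i W)^T *m theta) ord0 ord0.

Definition nonneg_vec (theta : 'cV[R]_k) : Prop := forall i, 0 <= theta i ord0.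
Definition pos_vec (theta : 'cV[R]_k) : Prop := forall i, 0 < theta i ord0.

Definition total (theta : 'cV[R]_k) : R := \sum_i theta i ord0.

Definition feasible (W : 'M[R]_k) (mu : R) (theta : 'cV[R]_k) : Prop :=
  nonneg_vec theta /\ forall i, mu <= util W i theta.

Definition upd (theta : 'cV[R]_k) (i : 'I_k) (t : R) : 'cV[R]_k :=
  \col_j (if j == i then t else theta j ord0).

Definition stable_eq (W : 'M[R]_k) (mu : R) (theta : 'cV[R]_k) : Prop :=
  feasible W mu theta /\
  forall i (t : R), 0 <= t -> t < theta i ord0 -> ~ (mu <= util W i (upd theta i t)).

Definition optimal_stable_eq (W : 'M[R]_k) (mu : R) (theta : 'cV[R]_k) : Prop :=
  stable_eq W mu theta /\
  forall theta', stable_eq W mu theta' -> total theta <= total theta'.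

Definition socially_optimal (W : 'M[R]_k) (mu : R) (theta : 'cV[R]_k) : Prop :=
  feasible W mu theta /\
  forall theta', feasible W mu theta' -> total theta <= total theta'.

End Collab.

From Pilot Require Import Defs.
From mathcomp Require Import all_boot all_order all_algebra.
From mathcomp Require Import ring lra.
Set Implicit Arguments. Unset Strict Implicit. Unset Printing Implicit Defensive.
Import Order.TTheory GRing.Theory Num.Theory.
Local Open Scope ring_scope.

(* If theta > 0 is stable and W has a positive diagonal, every player's
   constraint is tight, i.e. u_i(theta) = mu, since otherwise player i could
   lower theta_i a little and stay feasible.  For any feasible x, symmetry of W
   then gives the LP-duality computation
     mu * 1^T x = sum_j x_j u_j(theta) = sum_i theta_i u_i(x) >= mu * 1^T theta. *)

Section Collaboration.
Variables (R : realFieldType) (k : nat) (W : 'M[R]_k).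

Lemma utilE i (theta : 'cV[R]_k) : util W i theta = \sum_j W j i * theta j ord0.
Proof. by rewrite /util !mxE; apply: eq_bigr => j _; rewrite !mxE. Qed.

Lemma util_upd i theta t :
  util W i (upd theta i t) = util W i theta + W i i * (t - theta i ord0).
Proof.
rewrite !utilE (bigD1 i) //= [in RHS](bigD1 i) //= !mxE eqxx.
have -> : \sum_(j < k | j != i) W j i * upd theta i t j ord0 =
          \sum_(j < k | j != i) W j i * theta j ord0.
  by apply: eq_bigr => j /negbTE hj; rewrite !mxE hj.
ring.
Qed.

Lemma stable_eq_util_eq mu theta i :
  0 < W i i -> stable_eq W mu theta -> 0 < theta i ord0 ->
  util W i theta = mu.
Proof.
move=> Wii_gt0 [[_ feas] stable] theta_i_gt0.
apply/eqP; rewrite eq_le feas andbT leNgt; apply/negP => mu_lt.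
pose d := (util W i theta - mu) / W i i.
have Wii_d : W i i * d = util W i theta - mu.
  by rewrite mulrC divfK // gt_eqF.
have d_gt0 : 0 < d by rewrite divr_gt0 // subr_gt0.
pose t := Num.max 0 (theta i ord0 - d).
have theta_d_le_t : theta i ord0 - d <= t by rewrite le_max lexx orbT.
apply: (stable i t); first by rewrite le_max lexx.
- by rewrite gt_max theta_i_gt0 /= gtrBl.
- have : W i i * (theta i ord0 - d - theta i ord0) <= W i i * (t - theta i ord0).
    by apply: ler_wpM2l; [exact: ltW | rewrite lerD2r].
  rewrite util_upd addrAC subrr add0r mulrN Wii_d; lra.
Qed.

Hypothesis W_sym : symmetric_mx W.

Lemma symmetric_mxE i j : W i j = W j i.
Proof. by rewrite -[in LHS]W_sym mxE. Qed.

Lemma sum_mul_util_sym (x y : 'cV[R]_k) :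
  \sum_i x i ord0 * util W i y = \sum_i y i ord0 * util W i x.
Proof.
under eq_bigr => i _ do rewrite utilE mulr_sumr.
rewrite exchange_big /=; apply: eq_bigr => j _.
rewrite utilE mulr_sumr; apply: eq_bigr => i _.
by rewrite symmetric_mxE; ring.
Qed.

Lemma tight_total_le mu theta x :
  0 < mu -> nonneg_vec theta -> (forall i, util W i theta = mu) ->
  feasible W mu x -> Defs.total theta <= Defs.total x.
Proof.
move=> mu_gt0 theta_ge0 tight [_ x_feas].
rewrite -(ler_pM2r mu_gt0) /Defs.total !mulr_suml.
have -> : \sum_i x i ord0 * mu = \sum_i x i ord0 * util W i theta.
  by apply: eq_bigr => i _; rewrite tight.
rewrite sum_mul_util_sym; apply: ler_sum => i _.
exact: ler_wpM2l.
Qed.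

End Collaboration.

Theorem corollary1 (R : realFieldType) (k : nat) (W : 'M[R]_k) (mu : R)
  (theta_eq : 'cV[R]_k) :
  symmetric_mx W -> psd_mx W -> entries01 W -> unit_diag W -> 0 < mu ->
  optimal_stable_eq W mu theta_eq -> pos_vec theta_eq ->
  socially_optimal W mu theta_eq.
Proof.
(* Positive semidefiniteness, the entry bounds and optimality among stable
   equilibria are not needed: every positive stable equilibrium is optimal. *)
move=> W_sym _ _ W_diag mu_gt0 [stable _] theta_gt0.
have tight i : util W i theta_eq = mu.
  by apply: stable_eq_util_eq; rewrite ?W_diag.
have [feas _] := stable.
split=> // x x_feas.
by apply: (tight_total_le W_sym mu_gt0 _ tight x_feas) => i; exact: ltW.
Qed.
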